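(* Let $\Lambda\subset\mathbb{C}$ be a lattice which is not CM and is isogenous to $\overline{\Lambda}$, and let $\gamma\in\mathbb{C}$ with $\mathrm{Isog}(\Lambda,\overline{\Lambda})=\mathbb{Z}\cdot\gamma$. Let $\mathcal{V}\subset\mathbb{R}^2$ be a weakly bialgebraic set for $\mathcal{P}_\Lambda$ which is not a singleton, let $P\in\mathbb{R}[X,Y]$ be irreducible in $\mathbb{C}[X,Y]$ with real zero locus $\mathcal{V}$, and let $C_P\subset\mathbb{C}^2$ be the complex curve $P=0$. Suppose $f(C_P)=W+\sigma$, where $f(v,w)=(v+iw,v-iw)$, $\sigma\in\mathbb{C}^2$, and $W=\{(x,y)\in\mathbb{C}^2: y=rx\}$ for some $r\in\mathbb{C}$ is a one-dimensional complex subspace generated as an $\mathbb{R}$-vector space by two elements $w_1,w_2\in\Lambda\times\overline{\Lambda}$. Then $\gamma r^{-1}\in\mathbb{Q}$.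
   Context: Identify $\mathbb{R}^2$ with $\mathbb{C}$ via $(x,y)\mapsto x+iy$. For a lattice $\Lambda\subset\mathbb{C}$ let $\wp_\Lambda$ be its Weierstrass $\wp$-function and $\mathcal{P}_\Lambda:\mathbb{R}^2\smallsetminus\Lambda\to\mathbb{R}^2$, $(x,y)\mapsto(\mathrm{Re}\,\wp_\Lambda(x+iy),\mathrm{Im}\,\wp_\Lambda(x+iy))$. A non-empty subset $\mathcal{V}\subsetneq\mathbb{R}^2$ is weakly bialgebraic for $\mathcal{P}_\Lambda$ if (i) there exist algebraic subvarieties $V\subset\mathbb{A}^2_\mathbb{R}$ and $W'\subsetneq\mathbb{A}^2_\mathbb{R}$ with $\mathcal{V}=V(\mathbb{R})$ and $\mathcal{P}_\Lambda(\mathcal{V}\cap(\mathbb{R}^2\smallsetminus\Lambda))\subset W'(\mathbb{R})$; and (ii) $\mathcal{V}$ cannot be written as $V_1(\mathbb{R})\cup V_2(\mathbb{R})$ with $V_i$ algebraic subvarieties and both inclusions $V_i(\mathbb{R})\subset\mathcal{V}$ proper. For lattices $\Lambda_1,\Lambda_2$, $\mathrm{Isog}(\Lambda_1,\Lambda_2)=\{\alpha\in\mathbb{C}:\alpha\Lambda_1\subset\Lambda_2\}$; isogenous means this is non-zero; $\Lambda$ is CM if $\mathrm{Isog}(\Lambda,\Lambda)$ has rank two. $\overline{\Lambda}$ denotes the complex conjugate lattice. *)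

From mathcomp Require Import all_boot all_order all_algebra.
From mathcomp Require Import all_classical all_reals all_analysis.
From mathcomp Require Import complex Rstruct Rstruct_topology.
Import numFieldNormedType.Exports.
Import Order.TTheory GRing.Theory Num.Theory.

Set Implicit Arguments.
Unset Strict Implicit.
Unset Printing Implicit Defensive.

Local Open Scope ring_scope.
Local Open Scope classical_set_scope.
Local Open Scope complex_scope.

Definition RR : realType := Rdefinitions.R.
Notation CC := (RR[i]).

Definition cplx (p : RR * RR) : CC := p.1 +i* p.2.

Definition limC (u : nat -> CC) : CC := limn (u : nat -> (CC : numFieldType)).

Definition lattice_of (w1 w2 : CC) : set CC :=
  [set z | exists m n : int, z = m%:~R * w1 + n%:~R * w2].

Definition R_indep (w1 w2 : CC) : Prop :=
  forall a b : RR, a%:C * w1 + b%:C * w2 = 0 -> a = 0 /\ b = 0.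

(** Partial sums of the Weierstrass series over the box |m|,|n| <= N:
    1/z^2 + sum_{w != 0} (1/(z-w)^2 - 1/w^2), w = m w1 + n w2. *)
Definition wp_partial (w1 w2 : CC) (N : nat) (z : CC) : CC :=
  (z ^+ 2)^-1 +
  \sum_(i < (N.*2).+1) \sum_(j < (N.*2).+1)
     (let m : int := (i%:Z - N%:Z)%R in
      let n : int := (j%:Z - N%:Z)%R in
      let w := m%:~R * w1 + n%:~R * w2 in
      if (m == 0) && (n == 0) then 0 else ((z - w) ^+ 2)^-1 - (w ^+ 2)^-1).

(** Weierstrass wp-function of the lattice Z w1 + Z w2 (the series converges
    absolutely off the lattice, so the limit of the box partial sums is wp). *)
Definition wp (w1 w2 : CC) (z : CC) : CC := limC (fun N => wp_partial w1 w2 N z).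

Definition Pmap (w1 w2 : CC) (p : RR * RR) : RR * RR :=
  (complex.Re (wp w1 w2 (cplx p)), complex.Im (wp w1 w2 (cplx p))).

(** Bivariate polynomials K[X,Y] as {poly {poly K}} (inner variable X,
    outer variable Y); evaluation at (x, y). *)
Definition ev2 {K : comNzRingType} (P : {poly {poly K}}) (x y : K) : K :=
  (P.[y%:P]).[x].

Definition alg_set (S : seq {poly {poly RR}}) : set (RR * RR) :=
  [set p | forall P, P \in S -> ev2 P p.1 p.2 = 0].

Definition real_alg (A : set (RR * RR)) : Prop :=
  exists S : seq {poly {poly RR}}, A = alg_set S.

(** Weakly bialgebraic subsets for P_Lambda, Lambda = Z w1 + Z w2.
    A subvariety W' is proper (W' <> A^2_R) iff its ideal contains a
    nonzero polynomial. *)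
Definition weakly_bialgebraic (w1 w2 : CC) (V : set (RR * RR)) : Prop :=
  [/\ V !=set0, V != setT,
      exists S : seq {poly {poly RR}},
        V = alg_set S /\
        exists S' : seq {poly {poly RR}},
          has (fun Q => Q != 0) S' /\
          (forall p, V p -> ~ lattice_of w1 w2 (cplx p) ->
                     alg_set S' (Pmap w1 w2 p))
    & ~ (exists V1 V2 : set (RR * RR),
           [/\ real_alg V1, real_alg V2, V1 `<` V, V2 `<` V & V = V1 `|` V2])].

Definition irreducible2 (Q : {poly {poly CC}}) : Prop :=
  [/\ Q != 0, Q \isn't a GRing.unit &
      forall A B : {poly {poly CC}}, Q = A * B ->
        A \is a GRing.unit \/ B \is a GRing.unit].

Definition polyC2 (P : {poly {poly RR}}) : {poly {poly CC}} :=
  map_poly (map_poly (real_complex RR)) P.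

Definition curveC (P : {poly {poly RR}}) : set (CC * CC) :=
  [set q | ev2 (polyC2 P) q.1 q.2 = 0].

Definition f_map (q : CC * CC) : CC * CC := (q.1 + 'i * q.2, q.1 - 'i * q.2).

Definition Isog (L1 L2 : set CC) : set CC :=
  [set a | forall z, L1 z -> L2 (a * z)].

Definition conj_set (L : set CC) : set CC := (@conjc RR) @` L.

Definition isogenous (L1 L2 : set CC) : Prop :=
  exists a, a != 0 /\ Isog L1 L2 a.

Definition Zindep2 (a b : CC) : Prop :=
  forall m n : int, m%:~R * a + n%:~R * b = 0 -> m = 0 /\ n = 0.
Definition Zindep3 (a b c : CC) : Prop :=
  forall m n k : int, m%:~R * a + n%:~R * b + k%:~R * c = 0 ->
    [/\ m = 0, n = 0 & k = 0].

Definition rank_two (S : set CC) : Prop :=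
  (exists a b, [/\ S a, S b & Zindep2 a b]) /\
  ~ (exists a b c, [/\ S a, S b, S c & Zindep3 a b c]).

Definition is_CM (L : set CC) : Prop := rank_two (Isog L L).

(** The line W = {y = r x} is the real span of two points (x1, r x1), (x2, r x2)
    with x1, x2 in Lambda and r x1, r x2 in conj(Lambda).  Since W contains
    (1, r) and (i, r i), x1 and x2 are R-independent, so in a basis w1, w2 of
    Lambda they have integer coordinates of nonzero determinant D.  Then
    D Lambda lies in Z x1 + Z x2, hence D r Lambda lies in conj(Lambda), i.e.
    D r = k gamma for some integer k, and gamma / r = D / k is rational. *)
From mathcomp Require Import all_boot all_order all_algebra.
From mathcomp Require Import all_classical all_reals all_analysis.
From mathcomp Require Import complex Rstruct Rstruct_topology.
From mathcomp Require Import ring lra.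
Import Order.TTheory GRing.Theory Num.Theory.

Set Implicit Arguments.
Unset Strict Implicit.
Local Open Scope ring_scope.
Local Open Scope classical_set_scope.
Local Open Scope complex_scope.

(* [wedge u v = 2 i Im (u^* v)], an R-bilinear alternating form on C. *)
Definition wedge (u v : CC) : CC := conjc u * v - u * conjc v.

Lemma conjc_comb (a b : RR) (u v : CC) :
  conjc (a%:C * u + b%:C * v) = a%:C * conjc u + b%:C * conjc v.
Proof. by rewrite rmorphD !rmorphM /= !oppr0. Qed.

Lemma wedge_comb (a b c d : RR) (u v : CC) :
  wedge (a%:C * u + b%:C * v) (c%:C * u + d%:C * v) =
  (a * d - b * c)%:C * wedge u v.
Proof. by rewrite /wedge !conjc_comb rmorphB !rmorphM; ring. Qed.

Lemma wedge_intr_comb (a b c d : int) (u v : CC) :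
  wedge (a%:~R * u + b%:~R * v) (c%:~R * u + d%:~R * v) =
  (a * d - b * c)%:~R * wedge u v.
Proof.
have intrC (m : int) : m%:~R = (m%:~R : RR)%:C by rewrite rmorph_int.
by rewrite !intrC wedge_comb intrB !intrM.
Qed.

Lemma wedge1i_neq0 : wedge 1 'i != 0.
Proof.
rewrite /wedge conjc1 !mul1r.
by apply/eqP => /(congr1 (@complex.Im RR)) /=; lra.
Qed.

Lemma wedge_neq0_of_span (u v : CC) :
  (forall z, exists a b : RR, z = a%:C * u + b%:C * v) -> wedge u v != 0.
Proof.
move=> span; have [a [b one]] := span 1; have [c [d i]] := span 'i.
apply: contraNneq wedge1i_neq0 => uv0.
by rewrite one i wedge_comb uv0 mulr0.
Qed.

Lemma lattice_of_intr_comb (w1 w2 z1 z2 : CC) (m n : int) :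
  lattice_of w1 w2 z1 -> lattice_of w1 w2 z2 ->
  lattice_of w1 w2 (m%:~R * z1 + n%:~R * z2).
Proof.
move=> [a [b ->]] [c [d ->]].
by exists (m * a + n * c), (m * b + n * d); rewrite !intrD !intrM; ring.
Qed.

Lemma conj_lattice_of (w1 w2 : CC) :
  conj_set (lattice_of w1 w2) = lattice_of (conjc w1) (conjc w2).
Proof.
have conj_comb (m n : int) (u v : CC) :
    conjc (m%:~R * u + n%:~R * v) = m%:~R * conjc u + n%:~R * conjc v.
  by rewrite rmorphD !rmorphM !rmorph_int.
apply/seteqP; split=> z.
  by move=> [_ [m [n ->]] <-]; exists m, n; rewrite conj_comb.
move=> [m [n ->]]; exists (m%:~R * w1 + n%:~R * w2); first by exists m, n.
by rewrite conj_comb.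
Qed.

(* The adjugate identity [D z = (m d - n c) x1 + (n a - m b) x2] for
   [z = m w1 + n w2] puts [D * Lambda] inside [Z x1 + Z x2]. *)
Lemma Isog_det_mul (w1 w2 v1 v2 x1 x2 r : CC) (a b c d : int) :
  x1 = a%:~R * w1 + b%:~R * w2 -> x2 = c%:~R * w1 + d%:~R * w2 ->
  lattice_of v1 v2 (r * x1) -> lattice_of v1 v2 (r * x2) ->
  Isog (lattice_of w1 w2) (lattice_of v1 v2) ((a * d - b * c)%:~R * r).
Proof.
move=> x1E x2E rx1 rx2 _ [m [n ->]].
have -> : (a * d - b * c)%:~R * r * (m%:~R * w1 + n%:~R * w2) =
          (m * d - n * c)%:~R * (r * x1) + (n * a - m * b)%:~R * (r * x2).
  by rewrite x1E x2E !intrD !intrM !intrN; ring.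
exact: lattice_of_intr_comb.
Qed.

Lemma ratio_rat_of_intr_mul (r gamma : CC) (D k : int) :
  D != 0 -> D%:~R * r = k%:~R * gamma -> exists q : rat, gamma * r^-1 = ratr q.
Proof.
move=> D0 DrE; have [->|r0] := eqVneq r 0.
  (* [0^-1 = 0] in a field, so the case [r = 0] is trivial. *)
  by exists 0; rewrite invr0 mulr0 rmorph0.
have k0 : (k%:~R : CC) != 0.
  apply: contraPneq DrE => ->; rewrite mul0r; apply/eqP.
  by rewrite mulf_neq0 ?intr_eq0.
exists (D%:~R / k%:~R); rewrite fmorph_div !rmorph_int.
by apply: (mulfI k0); rewrite mulrA -DrE mulfK // mulrCA divff ?mulr1.
Qed.

Lemma line_spanned (r : CC) (u1 u2 : CC * CC) :
  [set q : CC * CC | q.2 = r * q.1] =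
    [set q | exists a b : RR,
       q = (a%:C * u1.1 + b%:C * u2.1, a%:C * u1.2 + b%:C * u2.2)] ->
  [/\ u1.2 = r * u1.1, u2.2 = r * u2.1 &
      forall z, exists a b : RR, z = a%:C * u1.1 + b%:C * u2.1].
Proof.
move=> W; have lineE q := congr1 (fun S => S q) W; split.
- rewrite [_ = _]lineE; exists 1, 0.
  by rewrite rmorph1 rmorph0 !mul1r !mul0r !addr0 -surjective_pairing.
- rewrite [_ = _]lineE; exists 0, 1.
  by rewrite rmorph1 rmorph0 !mul1r !mul0r !add0r -surjective_pairing.
- move=> z; have : (z, r * z).2 = r * (z, r * z).1 by [].
  by rewrite [_ = _]lineE => -[a [b [-> _]]]; exists a, b.
Qed.

Theorem lemma2p6p1 (w1 w2 gamma r : CC) (V : set (RR * RR))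
  (P : {poly {poly RR}}) (sigma : CC * CC) :
  R_indep w1 w2 ->
  ~ is_CM (lattice_of w1 w2) ->
  isogenous (lattice_of w1 w2) (conj_set (lattice_of w1 w2)) ->
  Isog (lattice_of w1 w2) (conj_set (lattice_of w1 w2)) =
    [set z | exists n : int, z = n%:~R * gamma] ->
  weakly_bialgebraic w1 w2 V ->
  ~ (exists p, V = [set p]) ->
  irreducible2 (polyC2 P) ->
  [set p | ev2 P p.1 p.2 = 0] = V ->
  f_map @` curveC P =
    [set q | exists w : CC * CC,
       w.2 = r * w.1 /\ q = (w.1 + sigma.1, w.2 + sigma.2)] ->
  (exists u1 u2 : CC * CC,
     [/\ lattice_of w1 w2 u1.1, conj_set (lattice_of w1 w2) u1.2,
         lattice_of w1 w2 u2.1, conj_set (lattice_of w1 w2) u2.2 &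
         [set q : CC * CC | q.2 = r * q.1] =
         [set q | exists a b : RR,
            q = (a%:C * u1.1 + b%:C * u2.1, a%:C * u1.2 + b%:C * u2.2)]]) ->
  exists q : rat, gamma * r^-1 = ratr q.
Proof.
move=> _ _ _ IsogE _ _ _ _ _ [u1 [u2 [[a [b x1E]] y1L [c [d x2E]] y2L W]]].
have [y1E y2E span] := line_spanned W.
have det0 : a * d - b * c != 0.
  apply: contra_neq (wedge_neq0_of_span span) => det0.
  by rewrite x1E x2E wedge_intr_comb det0 mul0r.
rewrite conj_lattice_of y1E in y1L; rewrite conj_lattice_of y2E in y2L.
have := Isog_det_mul x1E x2E y1L y2L.
by rewrite -conj_lattice_of IsogE => -[k]; exact: ratio_rat_of_intr_mul det0.
Qed.
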